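(* Let $E\in\mathcal Q$ be a quasi-regular hexagon and let $P\notin\mathcal Q$ be a polyiamond with $\|P\|\ge\|E\|$. Then $p(P)>p(E)$ and $s(P)>s(E)$.
   Context: Faces are the closed triangular faces of the triangular lattice $\mathbb T^2$ in $\mathbb R^2$. A polyiamond $P$ is a finite nonempty union of faces that is connected through shared edges (two faces sharing only a vertex are not adjacent); faces not in $P$ are empty faces. Its area $\|P\|$ is the number of its faces; its edge-perimeter $p(P)$ is the number of edges of $\mathbb T^2$ separating a face of $P$ from an empty face; its site-perimeter $s(P)$ is the number of empty faces sharing at least one edge with a face of $P$. For integers $d\ge1$, $a,b,c\ge0$ with $a+b,b+c,c+a\le d$, $T^d_{a,b,c}$ is the polyiamond obtained from an equilateral triangle of side length $d$ with sides on lattice lines (the union of its $d^2$ faces) by removing the equilateral sub-triangles of side lengths $a,b,c$ at its three corners; its boundary is a (possibly degenerate) hexagon with side lengths, in cyclic order, $a,\ d-a-b,\ b,\ d-b-c,\ c,\ d-c-a$, its area is $d^2-a^2-b^2-c^2$ and its edge- and site-perimeter equal $3d-a-b-c$. Quasi-regular hexagons: for $r\ge1$ let $E(r)=T^{3r}_{r,r,r}$ (regular hexagon of side $r$), $E_{B_1}(r)=T^{3r}_{r-1,r,r}$, $E_{B_2}(r)=T^{3r+1}_{r,r,r+1}$, $E_{B_3}(r)=T^{3r+1}_{r,r,r}$, $E_{B_4}(r)=T^{3r+2}_{r,r+1,r+1}$, $E_{B_5}(r)=T^{3r+2}_{r,r,r+1}$. Their areas are $6r^2,\ 6r^2+2r-1,\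 6r^2+4r,\ 6r^2+6r+1,\ 6r^2+8r+2,\ 6r^2+10r+3$, and their edge-perimeters (equal to their site-perimeters) are $6r,6r+1,\dots,6r+5$. A quasi-regular hexagon is any image of one of these under a symmetry (translation, rotation, reflection) of $\mathbb T^2$; $\mathcal Q$ denotes the set of all quasi-regular hexagons. *)

From HB Require Import structures.
From mathcomp Require Import all_boot all_order all_algebra.
From mathcomp Require Import finmap.
Set Implicit Arguments. Unset Strict Implicit. Unset Printing Implicit Defensive.
Import Order.TTheory GRing.Theory Num.Theory.
Local Open Scope ring_scope.


(* Lattice coordinates: vertices of T^2 are u*e1 + v*e2 with (u,v) in Z^2,
   e1 = (1,0), e2 = (1/2, sqrt 3/2).
   Face (x, y, false) = "up" triangle with vertices (x,y),(x+1,y),(x,y+1).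
   Face (x, y, true)  = "down" triangle with vertices (x+1,y),(x,y+1),(x+1,y+1). *)
Definition face := (int * int * bool)%type.

Definition nbrs (f : face) : seq face :=
  let: (x, y, d) := f in
  if d then [:: (x, y, false); (x + 1, y, false); (x, y + 1, false)]
  else [:: (x, y, true); (x - 1, y, true); (x, y - 1, true)].

Definition adj : rel face := fun f g => g \in nbrs f.

Definition is_polyiamond (P : {fset face}) : Prop :=
  P != fset0%fset /\
  forall f g, f \in P -> g \in P ->
    exists s : seq face, all (fun h => h \in P) s /\ path adj f s /\ last f s = g.

Definition area (P : {fset face}) : nat := #|` P|%fset.

(* edge-perimeter: number of (face of P, empty neighbour) pairs, i.e. of
   lattice edges separating a face of P from an empty face. *)
Definition edge_perimeter (P : {fset face}) : nat :=
  (\sum_(f <- enum_fset P) count (fun g => g \notin P) (nbrs f))%N.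

Definition site_perimeter (P : {fset face}) : nat :=
  size (undup (flatten [seq [seq g <- nbrs f | g \notin P] | f <- enum_fset P])).

(* T^d_{a,b,c}: triangle {u>=0, v>=0, u+v<=d} with corner triangles of sides
   a (at (0,0)), b (at (d,0)), c (at (0,d)) removed. *)
Definition inT (d a b c : int) (f : face) : bool :=
  let: (x, y, dn) := f in
  if dn then [&& 0 <= x, 0 <= y, x + y + 2 <= d, a < x + y + 2, x < d - b & y < d - c]
  else [&& 0 <= x, 0 <= y, x + y + 1 <= d, a < x + y + 1, x < d - b & y < d - c].

Definition inQbase (r : int) (i : nat) (f : face) : bool :=
  match i with
  | 0 => inT (3 * r) r r r f
  | 1 => inT (3 * r) (r - 1) r r f
  | 2 => inT (3 * r + 1) r r (r + 1) f
  | 3 => inT (3 * r + 1) r r r f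
  | 4 => inT (3 * r + 2) r (r + 1) (r + 1) f
  | _ => inT (3 * r + 2) r r (r + 1) f
  end.

(* rotation by 60 degrees about the origin: (u,v) |-> (-v, u+v) *)
Definition rot60 (f : face) : face :=
  let: (x, y, dn) := f in
  if dn then (- y - 1, x + y + 1, false) else (- y - 1, x + y, true).
Definition refl (f : face) : face := let: (x, y, dn) := f in (y, x, dn).
Definition transl (tx ty : int) (f : face) : face :=
  let: (x, y, dn) := f in (x + tx, y + ty, dn).

Definition lat_sym (k : nat) (s : bool) (tx ty : int) (f : face) : face :=
  transl tx ty ((if s then refl else id) (iter k rot60 f)).

(* P is a quasi-regular hexagon: the image of a base one under a symmetry
   (equivalently, its preimage under the inverse symmetry). *)
Definition is_QR (P : {fset face}) : Prop :=
  exists (r : int) (i : nat) (k : nat) (s : bool) (tx ty : int),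
    1 <= r /\ (i < 6)%N /\ (k < 6)%N /\
    forall f : face, (f \in P) = inQbase r i (lat_sym k s tx ty f).

From HB Require Import structures.
From mathcomp Require Import all_boot all_order all_algebra.
From mathcomp Require Import finmap.
From mathcomp Require Import zify.
Set Implicit Arguments. Unset Strict Implicit. Unset Printing Implicit Defensive.
Import Order.TTheory GRing.Theory Num.Theory.
Local Open Scope fset_scope.
Local Open Scope ring_scope.

(* Every face lies on one strip of faces in each of the three edge
   directions.  A box (faces whose three strip indices lie in given
   intervals) is, up to translation, a trimmed triangle T^d_{a,b,c}; its
   width, the number of strips it meets, is 3d - a - b - c.
   Then either the box of P is wider than E, and p(P) >= s(P) > p(E) >= s(E),
   or it has the area and width of E, so P fills it and is quasi-regular. *)

(* Line coordinates of a face (x, y, d): every face lies on one lattice strip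
   in each of the three edge directions, indexed by x, by y and by
   z = x + y + d, where d = 1 for a down face. *)
Definition fx (f : face) : int := f.1.1.
Definition fy (f : face) : int := f.1.2.
Definition fd (f : face) : int := if f.2 then 1 else 0.
Definition fz (f : face) : int := fx f + fy f + fd f.

Inductive dir := DX | DY | DZ.

(* [line K f] indexes the strip of direction K through f, and [pos K f]
   orders the faces of that strip; [fwd K f] and [bwd K f] are the next and
   previous faces of the strip, which share an edge with f. *)
Definition line (K : dir) (f : face) : int :=
  match K with DX => fx f | DY => fy f | DZ => fz f end.
Definition pos (K : dir) (f : face) : int :=
  match K with DY => 2 * fx f + fd f | _ => 2 * fy f + fd f end.
Definition fwd (K : dir) (f : face) : face :=
  let: (x, y, d) := f in
  match K with
  | DX => if d then (x, y + 1, false) else (x, y, true)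
  | DY => if d then (x + 1, y, false) else (x, y, true)
  | DZ => if d then (x, y + 1, false) else (x - 1, y, true)
  end.
Definition bwd (K : dir) (f : face) : face :=
  let: (x, y, d) := f in
  match K with
  | DX => if d then (x, y, false) else (x, y - 1, true)
  | DY => if d then (x, y, false) else (x - 1, y, true)
  | DZ => if d then (x + 1, y, false) else (x, y - 1, true)
  end.

Ltac case_face f :=
  let x := fresh "x" in let y := fresh "y" in let d := fresh "d" in
  case: f => [[x y] d].

Lemma line_fwd K f : line K (fwd K f) = line K f.
Proof. case_face f; case: K; case: d; rewrite /line /fz /fx /fy /fd /=; lia. Qed.

Lemma line_bwd K f : line K (bwd K f) = line K f.
Proof. case_face f; case: K; case: d; rewrite /line /fz /fx /fy /fd /=; lia. Qed.

Lemma pos_fwd K f : pos K (fwd K f) = pos K f + 1.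
Proof. case_face f; case: K; case: d; rewrite /pos /fx /fy /fd /=; lia. Qed.

Lemma pos_bwd K f : pos K (bwd K f) = pos K f - 1.
Proof. case_face f; case: K; case: d; rewrite /pos /fx /fy /fd /=; lia. Qed.

Lemma line_pos_inj K f g : line K f = line K g -> pos K f = pos K g -> f = g.
Proof.
case_face f; case_face g; case: K; rewrite /line /pos /fz /fx /fy /fd /=;
  case: d; case: d0 => H1 H2; try lia; congr (_, _, _); lia.
Qed.

Lemma fwdK K f : bwd K (fwd K f) = f.
Proof. by apply: (@line_pos_inj K); rewrite ?(line_bwd, line_fwd, pos_bwd, pos_fwd) //; lia. Qed.

Lemma bwdK K f : fwd K (bwd K f) = f.
Proof. by apply: (@line_pos_inj K); rewrite ?(line_bwd, line_fwd, pos_bwd, pos_fwd) //; lia. Qed.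

Lemma fwd_nbr K f : fwd K f \in nbrs f.
Proof. case_face f; case: K; case: d; rewrite /= !inE eqxx ?orbT //. Qed.

Lemma bwd_nbr K f : bwd K f \in nbrs f.
Proof. case_face f; case: K; case: d; rewrite /= !inE eqxx ?orbT //. Qed.

Lemma line_nbr K f g : g \in nbrs f -> line K f - 1 <= line K g <= line K f + 1.
Proof.
case_face f; case: d; rewrite /= !inE => /or3P [] /eqP ->;
  case: K; rewrite /line /fz /fx /fy /fd /=; lia.
Qed.

(* The six strip neighbours of f list each of its three neighbours twice. *)
Lemma count_strip_nbrs (q : pred face) f :
  ((q (fwd DX f) + q (bwd DX f)) + (q (fwd DY f) + q (bwd DY f))
   + (q (fwd DZ f) + q (bwd DZ f)))%N = (2 * count q (nbrs f))%N.
Proof.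
case_face f; case: d => /=;
 [ case: (q (x, y, false)); case: (q (x + 1, y, false)); case: (q (x, y + 1, false))
 | case: (q (x, y, true)); case: (q (x - 1, y, true)); case: (q (x, y - 1, true))] => //.
Qed.

Lemma strip_ends_le2 (q : pred face) g :
  ((q (fwd DX g) (+) q (bwd DX g)) + (q (fwd DY g) (+) q (bwd DY g))
   + (q (fwd DZ g) (+) q (bwd DZ g)) <= 2)%N.
Proof.
case_face g; case: d => /=;
 [ case: (q (x, y, false)); case: (q (x + 1, y, false)); case: (q (x, y + 1, false))
 | case: (q (x, y, true)); case: (q (x - 1, y, true)); case: (q (x, y - 1, true))] => //.
Qed.

Definition irange (lo : int) (n : nat) : seq int := [seq lo + i%:Z | i <- iota 0 n].

Lemma mem_irange lo n x : (x \in irange lo n) = (lo <= x < lo + n%:Z).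
Proof.
apply/mapP/idP => [[i]|H]; first by rewrite mem_iota add0n => Hi ->; lia.
by exists `|(x - lo)%R|%N; [rewrite mem_iota add0n|]; lia.
Qed.

Lemma uniq_irange lo n : uniq (irange lo n).
Proof. by rewrite map_inj_uniq ?iota_uniq // => i j; lia. Qed.

Lemma size_irange lo n : size (irange lo n) = n.
Proof. by rewrite size_map size_iota. Qed.

Lemma irangeS lo n : irange lo n.+1 = irange lo n ++ [:: lo + n%:Z].
Proof. by rewrite /irange -addn1 iotaD map_cat. Qed.

Lemma uniq_int_bound (l : seq int) lo hi :
  uniq l -> (forall x, x \in l -> lo <= x <= hi) ->
  (size l)%:Z <= Num.max 0 (hi - lo + 1).
Proof.
move=> Hu Hb; have [Hlh|Hlh] := ltP hi lo.
  case: l Hu Hb => [|x l] _ Hb /=; first lia.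
  by have := Hb x (mem_head _ _); lia.
have : (size l <= size (irange lo `|(hi - lo + 1)%R|%N))%N.
  by apply: uniq_leq_size => // x /Hb Hx; rewrite mem_irange; lia.
rewrite size_irange; lia.
Qed.

Lemma count_by_key (T : eqType) (p : pred T) (key : T -> int) (ks : seq int) (s : seq T) :
  uniq ks ->
  (\sum_(k <- ks) count (fun x => p x && (key x == k)) s)%N =
  count (fun x => p x && (key x \in ks)) s.
Proof.
elim: ks => [|k ks IH] /=; first by rewrite big_nil; elim: s => //= x s <-; case: (p x).
case/andP => Hk /IH {}IH; rewrite big_cons IH -count_predUI.
rewrite [X in (_ + X)%N](eq_count (a2 := pred0)) ?count_pred0 ?addn0; last first.
  by move=> x /=; case: (p x); case: eqP => //= ->; rewrite (negbTE Hk).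
by apply: eq_count => x /=; rewrite inE; case: (p x).
Qed.

Lemma seq_argmin (T : eqType) (F : T -> int) (s : seq T) :
  s != [::] -> exists2 x, x \in s & forall y, y \in s -> F x <= F y.
Proof.
elim: s => [|a s IH] // _.
have [->|/IH [x Hx Hmin]] := eqVneq s [::].
  by exists a => [|y]; rewrite ?inE // => /eqP ->.
have [Hax|Hxa] := leP (F a) (F x).
  exists a => [|y]; first exact: mem_head.
  by rewrite inE => /orP [/eqP ->//|/Hmin]; lia.
exists x => [|y]; first by rewrite inE Hx orbT.
by rewrite inE => /orP [/eqP ->|/Hmin]; lia.
Qed.

Lemma seq_argmax (T : eqType) (F : T -> int) (s : seq T) :
  s != [::] -> exists2 x, x \in s & forall y, y \in s -> F y <= F x.
Proof. by move=> /(seq_argmin (fun x => - F x)) [x Hx H]; exists x => // y /H; lia. Qed.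

Section StripEnds.
Variable P : {fset face}.

(* The empty neighbours of P, listed once per boundary edge: its length is
   the edge-perimeter and its number of distinct items the site-perimeter. *)
Definition boundary_faces : seq face :=
  flatten [seq [seq g <- nbrs f | g \notin P] | f <- enum_fset P].

Lemma boundary_facesP f g : f \in P -> g \in nbrs f -> g \notin P -> g \in boundary_faces.
Proof.
move=> Hf Hg HgP; apply/flattenP; exists [seq g <- nbrs f | g \notin P].
  by apply/mapP; exists f.
by rewrite mem_filter HgP.
Qed.

Lemma edge_perimeter_boundary : edge_perimeter P = size boundary_faces.
Proof.
rewrite /edge_perimeter /boundary_faces size_flatten /shape -map_comp sumnE big_map.
by apply: eq_bigr => f _ /=; rewrite size_filter.
Qed.

Lemma site_le_edge : (site_perimeter P <= edge_perimeter P)%N.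
Proof. by rewrite edge_perimeter_boundary /site_perimeter size_undup. Qed.

Definition strip_end (K : dir) (g : face) : bool := (fwd K g \in P) (+) (bwd K g \in P).

Definition occupied (K : dir) : seq int := undup (map (line K) (enum_fset P)).

Lemma strip_ends_total (B : seq face) :
  (count (strip_end DX) B + count (strip_end DY) B + count (strip_end DZ) B
   <= 2 * size B)%N.
Proof.
elim: B => //= g B IH.
have : (strip_end DX g + strip_end DY g + strip_end DZ g <= 2)%N :=
  strip_ends_le2 (fun h => h \in P) g.
lia.
Qed.

(* Beyond the first and last faces of P on an occupied strip lie two
   distinct empty faces, both strip ends adjacent to P. *)
Lemma occupied_strip_ends K k : k \in occupied K ->
  exists g1 g2, [/\ g1 != g2, g1 \in boundary_faces, g2 \in boundary_faces &
    forall g, g \in [:: g1; g2] -> strip_end K g && (line K g == k)].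
Proof.
rewrite mem_undup => /mapP [f0 Hf0 ->].
set S := [seq f <- enum_fset P | line K f == line K f0].
have f0S : f0 \in S by rewrite mem_filter Hf0 eqxx.
have HS : S != [::] by apply: contraTneq f0S => ->.
have [fm + Hmin] := seq_argmin (pos K) HS; have [fM + Hmax] := seq_argmax (pos K) HS.
rewrite !mem_filter => /andP [/eqP HlM HfM] /andP [/eqP Hlm Hfm].
have Hmm := Hmin fM (ltac:(by rewrite mem_filter HlM eqxx)).
have outside h : line K h = line K f0 -> (pos K h < pos K fm) || (pos K fM < pos K h) ->
    h \notin P.
  move=> Hh Hpos; apply/negP => HhP.
  have HhS : h \in S by rewrite mem_filter Hh eqxx.
  by have := Hmin h HhS; have := Hmax h HhS; lia.
exists (bwd K fm), (fwd K fM); split.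
- by apply/eqP => /(congr1 (pos K)); rewrite pos_bwd pos_fwd; lia.
- by apply: (boundary_facesP Hfm (bwd_nbr K fm)); apply: outside;
    rewrite ?line_bwd ?pos_bwd //; lia.
- by apply: (boundary_facesP HfM (fwd_nbr K fM)); apply: outside;
    rewrite ?line_fwd ?pos_fwd //; lia.
move=> g; rewrite !inE => /orP [] /eqP ->; rewrite /strip_end.
  rewrite bwdK Hfm (negbTE (outside _ _ _)) ?line_bwd ?Hlm ?eqxx ?pos_bwd //; lia.
rewrite fwdK HfM (negbTE (outside _ _ _)) ?line_fwd ?HlM ?eqxx ?pos_fwd //; lia.
Qed.

Lemma occupied_le_ends K :
  (2 * size (occupied K) <= count (strip_end K) (undup boundary_faces))%N.
Proof.
set Bs := undup boundary_faces.
apply: (@leq_trans (count (fun g => strip_end K g && (line K g \in occupied K)) Bs));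
  last by apply: sub_count => g /andP [].
rewrite -count_by_key ?undup_uniq // -sum1_size big_distrr /= big_seq.
rewrite [X in (_ <= X)%N]big_seq; apply: leq_sum => k /occupied_strip_ends.
move=> [g1 [g2 [Hne Hg1 Hg2 Hend]]]; rewrite muln1 -size_filter.
have -> : 2%N = size [:: g1; g2] by [].
apply: uniq_leq_size => [|g Hg]; first by rewrite /= inE Hne.
rewrite mem_filter Hend // /Bs mem_undup.
by move: Hg; rewrite !inE => /orP [] /eqP ->.
Qed.

(* Every occupied strip contributes two strip ends, and an empty face is a
   strip end in at most two directions. *)
Lemma site_perimeter_ge_occupied :
  (size (occupied DX) + size (occupied DY) + size (occupied DZ) <= site_perimeter P)%N.
Proof.
rewrite -(leq_pmul2l (isT : (0 < 2)%N)) !mulnDr.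
apply: leq_trans (strip_ends_total (undup boundary_faces)).
by rewrite !leq_add ?occupied_le_ends.
Qed.

(* In a polyiamond the occupied strips of each direction form an interval,
   since crossing an edge changes strip indices by at most one. *)
Lemma occupied_interval K f g (k : int) : is_polyiamond P -> f \in P -> g \in P ->
  line K f <= k <= line K g -> k \in occupied K.
Proof.
move=> [_ Hconn] Hf Hg; have [s [Hs [Hpath Hlast]]] := Hconn f g Hf Hg.
elim: s f Hf Hs Hpath Hlast => [|f' s IH] f Hf /=.
  by move=> _ _ -> Hk; rewrite mem_undup; apply/mapP; exists g => //; lia.
case/andP => Hf' Hs /andP [Hadj Hpath] Hlast Hk.
have [->|Hne] := eqVneq k (line K f); first by rewrite mem_undup map_f.
by apply: (IH f') => //; have := line_nbr K Hadj; lia.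
Qed.

Lemma occupied_span K f g : is_polyiamond P -> f \in P -> g \in P ->
  line K f <= line K g -> line K g - line K f + 1 <= (size (occupied K))%:Z.
Proof.
move=> HP Hf Hg Hfg.
have : (size (irange (line K f) `|(line K g - line K f + 1)%R|%N) <=
        size (occupied K))%N.
  apply: uniq_leq_size => [|k]; first exact: uniq_irange.
  by rewrite mem_irange => Hk; apply: (occupied_interval HP Hf Hg); lia.
rewrite size_irange; lia.
Qed.

End StripEnds.

(* A hexagonal box: the faces whose three strip indices lie in given
   intervals.  Up to translation it is a trimmed triangle T^d_{a,b,c}, with
   (d, a, b, c) its [box_shape]. *)
Record box := Box { bx0 : int; bx1 : int; by0 : int; by1 : int; bz0 : int; bz1 : int }.

Definition inBox (B : box) (f : face) : bool :=
  [&& bx0 B <= fx f, fx f <= bx1 B, by0 B <= fy f, fy f <= by1 B,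
      bz0 B <= fz f & fz f <= bz1 B].

Definition box_shape (B : box) : int * int * int * int :=
  (bz1 B - bx0 B - by0 B + 1, bz0 B - bx0 B - by0 B,
   bz1 B - by0 B - bx1 B, bz1 B - bx0 B - by1 B).

Definition tri_ok (t : int * int * int * int) : bool :=
  let: (d, a, b, c) := t in
  [&& 0 <= a, 0 <= b, 0 <= c, a + b <= d, b + c <= d & c + a <= d].
Definition tri_area (t : int * int * int * int) : int :=
  let: (d, a, b, c) := t in d * d - a * a - b * b - c * c.
Definition tri_width (t : int * int * int * int) : int :=
  let: (d, a, b, c) := t in 3 * d - a - b - c.

Definition width (B : box) : int :=
  (bx1 B - bx0 B + 1) + (by1 B - by0 B + 1) + (bz1 B - bz0 B + 1).

Lemma width_shape B : width B = tri_width (box_shape B).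
Proof. by case: B => *; rewrite /width /tri_width /=; lia. Qed.

(* Counting the faces of a box row by row (rows are the DY-strips): row y
   consists of the faces with positions in [row_lo B y, row_hi B y]. *)
Definition row_lo (B : box) (y : int) : int := Num.max (2 * bx0 B) (2 * (bz0 B - y) - 1).
Definition row_hi (B : box) (y : int) : int := Num.min (2 * bx1 B + 1) (2 * (bz1 B - y)).
Definition row_len (B : box) (y : int) : int := Num.max 0 (row_hi B y - row_lo B y + 1).
Definition nrows (B : box) : nat := `|(Num.max 0 (by1 B - by0 B + 1))%R|%N.
Definition rows_total (B : box) : int := \sum_(y <- irange (by0 B) (nrows B)) row_len B y.

Lemma inBox_row B f : inBox B f =
  [&& by0 B <= fy f, fy f <= by1 B, row_lo B (fy f) <= pos DY f & pos DY f <= row_hi B (fy f)].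
Proof. case_face f; rewrite /inBox /row_lo /row_hi /pos /fz /fx /fy /fd /=; case: d; lia. Qed.

Lemma mem_rows B f : inBox B f -> fy f \in irange (by0 B) (nrows B).
Proof. by rewrite mem_irange /inBox /nrows; lia. Qed.

Definition face_at (y t : int) : face := ((t %/ 2)%Z, y, (t %% 2)%Z == 1).

Lemma face_at_y y t : fy (face_at y t) = y.
Proof. by []. Qed.

Lemma face_at_pos y t : pos DY (face_at y t) = t.
Proof. rewrite /pos /face_at /fx /fd /=; case: eqP; lia. Qed.

Section RowCount.
Variables (B : box) (s : seq face).
Hypothesis s_uniq : uniq s.

Definition row_count (y : int) : nat := count (fun f => fy f == y) s.

Lemma size_by_rows : {in s, forall f, inBox B f} ->
  (size s)%:Z = \sum_(y <- irange (by0 B) (nrows B)) (row_count y)%:Z.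
Proof.
move=> Hs; transitivity (Posz (\sum_(y <- irange (by0 B) (nrows B)) row_count y)%N).
  have := count_by_key predT fy s (uniq_irange (by0 B) (nrows B)); rewrite /= => ->.
  rewrite -size_filter; congr (Posz (size _)).
  by apply/esym/all_filterP/allP => f /Hs /mem_rows.
by rewrite -natz natr_sum; apply: eq_bigr => y _; rewrite natz.
Qed.

(* Faces of one row are determined by their positions. *)
Lemma row_count_le y : {in s, forall f, inBox B f} -> (row_count y)%:Z <= row_len B y.
Proof.
move=> Hs; rewrite /row_count -size_filter -(size_map (pos DY)) /row_len.
apply: uniq_int_bound => [|t /mapP [f]].
  rewrite map_inj_in_uniq ?filter_uniq // => f g.
  rewrite !mem_filter => /andP [/eqP Hf _] /andP [/eqP Hg _] Hp.
  by apply: (@line_pos_inj DY) => //=; rewrite Hf Hg.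
by rewrite mem_filter => /andP [/eqP Hf /Hs] + ->; rewrite inBox_row Hf; lia.
Qed.

Lemma row_count_full y : (forall f, (f \in s) = inBox B f) ->
  by0 B <= y <= by1 B -> row_len B y <= (row_count y)%:Z.
Proof.
move=> Hs Hy; rewrite /row_len.
have [Hneg|Hlen] := ltP (row_hi B y - row_lo B y + 1) 0; first lia.
set n := `|(row_hi B y - row_lo B y + 1)%R|%N.
have : (size (map (face_at y) (irange (row_lo B y) n)) <= row_count y)%N.
  rewrite /row_count -size_filter; apply: uniq_leq_size => [|g /mapP [t]].
    rewrite map_inj_uniq ?uniq_irange // => t t' /(congr1 (pos DY)).
    by rewrite !face_at_pos.
  rewrite mem_irange => Ht ->.
  rewrite mem_filter face_at_y eqxx Hs inBox_row face_at_y face_at_pos /=.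
  by rewrite /n in Ht; lia.
rewrite size_map size_irange /n; lia.
Qed.

Lemma size_le_rows_total : {in s, forall f, inBox B f} -> (size s)%:Z <= rows_total B.
Proof.
by move=> Hs; rewrite size_by_rows // /rows_total; apply: ler_sum => y _; apply: row_count_le.
Qed.

Lemma size_eq_rows_total : (forall f, (f \in s) = inBox B f) -> (size s)%:Z = rows_total B.
Proof.
move=> Hs; have Hs' : {in s, forall f, inBox B f} by move=> f; rewrite Hs.
apply/eqP; rewrite eq_le size_le_rows_total //= size_by_rows // /rows_total.
rewrite big_seq [X in _ <= X]big_seq; apply: ler_sum => y.
by rewrite mem_irange /nrows => Hy; apply: row_count_full => //; lia.
Qed.

End RowCount.

(* Number of faces removed from the first k rows by a corner of side a. *)
Definition corner (a : int) (k : int) : int := if k <= a then 2 * a * k - k * k else a * a.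

(* Summing the rows: row j of T^d has 2(d - j) - 1 faces, of which the
   corners of sides a and b remove 2(a - j) - 1 and 2(b - j) - 1 faces when
   j < a, resp. j < b; the corner of side c removes the last c rows. *)
Lemma rows_total_area B : tri_ok (box_shape B) -> rows_total B = tri_area (box_shape B).
Proof.
case: B => x0 x1 y0 y1 z0 z1; rewrite /tri_ok /tri_area /box_shape /rows_total /nrows /=.
set d : int := z1 - x0 - y0 + 1; set a : int := z0 - x0 - y0.
set b : int := z1 - y0 - x1; set c : int := z1 - x0 - y1 => Hok.
have partial (k : nat) : k%:Z <= d - c ->
    \sum_(y <- irange y0 k) row_len (Box x0 x1 y0 y1 z0 z1) y =
    2 * d * k%:Z - k%:Z * k%:Z - corner a k%:Z - corner b k%:Z.
  elim: k => [|k IH] Hk; first by rewrite big_nil /corner; case: ifP; case: ifP; lia.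
  rewrite irangeS big_cat big_seq1 IH; last lia.
  rewrite /row_len /row_lo /row_hi /corner /=.
  have -> : Posz k.+1 = k%:Z + 1 by lia.
  case: (leP (k%:Z + 1) a); case: (leP k%:Z a);
  case: (leP (k%:Z + 1) b); case: (leP k%:Z b); first [lia | nia].
rewrite partial /corner; last lia.
have -> : (Posz `|(Num.max 0 (y1 - y0 + 1))%R|%N) = d - c by lia.
case: (leP (d - c) a); case: (leP (d - c) b); nia.
Qed.

Lemma area_le_box (F : {fset face}) B : tri_ok (box_shape B) ->
  (forall f, f \in F -> inBox B f) -> (area F)%:Z <= tri_area (box_shape B).
Proof.
by move=> Hok HF; rewrite /area -rows_total_area //; apply: (size_le_rows_total (fset_uniq F)).
Qed.

Lemma area_filled_box (F : {fset face}) B : tri_ok (box_shape B) ->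
  (forall f, (f \in F) = inBox B f) -> (area F)%:Z = tri_area (box_shape B).
Proof.
by move=> Hok HF; rewrite /area -rows_total_area //; apply: (size_eq_rows_total (fset_uniq F)).
Qed.

Lemma filled_of_area (F : {fset face}) B : tri_ok (box_shape B) ->
  (forall f, f \in F -> inBox B f) -> tri_area (box_shape B) <= (area F)%:Z ->
  forall f, (f \in F) = inBox B f.
Proof.
move=> Hok HF Harea f; apply/idP/idP => [/HF //|Hf].
apply/negPn/negP => HfF.
have := area_le_box Hok HF.
have : ((area F).+1%:Z <= tri_area (box_shape B)).
  rewrite -rows_total_area //.
  apply: (@size_le_rows_total B (f :: enum_fset F)) => [|g].
    by rewrite /= fset_uniq andbT.
  by rewrite inE => /orP [/eqP ->|/HF].
lia.
Qed.

Definition klo (K : dir) (B : box) : int :=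
  match K with DX => bx0 B | DY => by0 B | DZ => bz0 B end.
Definition khi (K : dir) (B : box) : int :=
  match K with DX => bx1 B | DY => by1 B | DZ => bz1 B end.

Lemma line_in_box K B f : inBox B f -> klo K B <= line K f <= khi K B.
Proof. by case: K; rewrite /inBox /=; lia. Qed.

Lemma box_strip_convex K B f g : inBox B f -> inBox B g -> line K f = line K g ->
  pos K f < pos K g -> inBox B (fwd K f) && inBox B (bwd K g).
Proof.
case_face f; case_face g; case: B => ? ? ? ? ? ?; case: K; case: d; case: d0;
  rewrite /inBox /line /pos /fz /fx /fy /fd /=; lia.
Qed.

Definition exits (F : {fset face}) (st : face -> face) : nat :=
  count (fun f => st f \notin F) (enum_fset F).

(* Doubling the edge-perimeter counts each boundary edge once from each of
   the two strips through it. *)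
Lemma twice_edge_perimeter (F : {fset face}) :
  (2 * edge_perimeter F =
   (exits F (fwd DX) + exits F (bwd DX)) + (exits F (fwd DY) + exits F (bwd DY)) +
   (exits F (fwd DZ) + exits F (bwd DZ)))%N.
Proof.
rewrite /edge_perimeter /exits; elim: (enum_fset F) => [|f s IH] /=; first by rewrite big_nil.
by rewrite big_cons mulnDr IH -(count_strip_nbrs (fun g => g \notin F)) /=; lia.
Qed.

Section FilledBox.
Variables (F : {fset face}) (B : box).
Hypothesis F_box : forall f, (f \in F) = inBox B f.

Lemma exits_per_strip K (st : face -> face) :
  (forall f g, f \in F -> g \in F -> line K f = line K g -> pos K f < pos K g ->
     (st f \in F) || (st g \in F)) ->
  (exits F st)%:Z <= Num.max 0 (khi K B - klo K B + 1).
Proof.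
move=> Hst; rewrite /exits -size_filter -(size_map (line K)).
apply: uniq_int_bound => [|k /mapP [f]].
  rewrite map_inj_in_uniq ?filter_uniq ?fset_uniq // => f g.
  rewrite !mem_filter => /andP [Hf HfF] /andP [Hg HgF] Hk.
  have [Hp|Hp|Hp] := ltgtP (pos K f) (pos K g).
  - by have := Hst f g HfF HgF Hk Hp; rewrite (negbTE Hf) (negbTE Hg).
  - by have := Hst g f HgF HfF (esym Hk) Hp; rewrite (negbTE Hf) (negbTE Hg).
  - exact: line_pos_inj Hk Hp.
by rewrite mem_filter => /andP [_ Hf] ->; apply: line_in_box; rewrite -F_box.
Qed.

Lemma exits_fwd K :
  (exits F (fwd K))%:Z <= Num.max 0 (khi K B - klo K B + 1).
Proof.
apply: exits_per_strip => f g; rewrite !F_box => Hf Hg Hl Hp.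
by case/andP: (box_strip_convex Hf Hg Hl Hp) => ->.
Qed.

Lemma exits_bwd K :
  (exits F (bwd K))%:Z <= Num.max 0 (khi K B - klo K B + 1).
Proof.
apply: exits_per_strip => f g; rewrite !F_box => Hf Hg Hl Hp.
by case/andP: (box_strip_convex Hf Hg Hl Hp) => _ ->; rewrite orbT.
Qed.

Lemma filled_box_perimeter : tri_ok (box_shape B) -> (edge_perimeter F)%:Z <= width B.
Proof.
move=> Hok; have := twice_edge_perimeter F.
have := exits_fwd DX; have := exits_bwd DX; have := exits_fwd DY.
have := exits_bwd DY; have := exits_fwd DZ; have := exits_bwd DZ.
by move: Hok; rewrite /tri_ok /width /box_shape /=; lia.
Qed.

End FilledBox.

Definition rotB (B : box) : box :=
  Box (bz0 B) (bz1 B) (- bx1 B - 1) (- bx0 B - 1) (by0 B) (by1 B).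
Definition reflB (B : box) : box := Box (by0 B) (by1 B) (bx0 B) (bx1 B) (bz0 B) (bz1 B).
Definition translB (tx ty : int) (B : box) : box :=
  Box (bx0 B - tx) (bx1 B - tx) (by0 B - ty) (by1 B - ty) (bz0 B - tx - ty) (bz1 B - tx - ty).
Definition symB (k : nat) (s : bool) (tx ty : int) (B : box) : box :=
  iter k rotB ((if s then reflB else id) (translB tx ty B)).

Lemma inBox_rot B f : inBox B (rot60 f) = inBox (rotB B) f.
Proof. case_face f; case: B => *; case: d; rewrite /inBox /fz /fx /fy /fd /=; lia. Qed.

Lemma inBox_refl B f : inBox B (refl f) = inBox (reflB B) f.
Proof. case_face f; case: B => *; case: d; rewrite /inBox /fz /fx /fy /fd /=; lia. Qed.

Lemma inBox_transl B tx ty f : inBox B (transl tx ty f) = inBox (translB tx ty B) f.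
Proof. case_face f; case: B => *; case: d; rewrite /inBox /fz /fx /fy /fd /=; lia. Qed.

Lemma inBox_iter_rot k B f : inBox B (iter k rot60 f) = inBox (iter k rotB B) f.
Proof. by elim: k B => [|k IH] B //=; rewrite inBox_rot IH -iterS iterSr. Qed.

Lemma inBox_sym k s tx ty B f : inBox B (lat_sym k s tx ty f) = inBox (symB k s tx ty B) f.
Proof. by rewrite /lat_sym /symB inBox_transl -inBox_iter_rot; case: s; rewrite //= inBox_refl. Qed.

Definition rot_shape (t : int * int * int * int) : int * int * int * int :=
  let: (d, a, b, c) := t in (2 * d - a - b - c, d - a - b, d - b - c, d - c - a).
Definition refl_shape (t : int * int * int * int) : int * int * int * int :=
  let: (d, a, b, c) := t in (d, a, c, b).
Definition sym_shape (k : nat) (s : bool) (t : int * int * int * int) :=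
  iter k rot_shape ((if s then refl_shape else id) t).

Lemma shape_rotB B : box_shape (rotB B) = rot_shape (box_shape B).
Proof. by case: B => *; rewrite /box_shape /=; congr (_, _, _, _); lia. Qed.

Lemma shape_reflB B : box_shape (reflB B) = refl_shape (box_shape B).
Proof. by case: B => *; rewrite /box_shape /=; congr (_, _, _, _); lia. Qed.

Lemma shape_translB tx ty B : box_shape (translB tx ty B) = box_shape B.
Proof. by case: B => *; rewrite /box_shape /=; congr (_, _, _, _); lia. Qed.

Lemma shape_sym k s tx ty B : box_shape (symB k s tx ty B) = sym_shape k s (box_shape B).
Proof.
rewrite /symB /sym_shape; elim: k => [|k IH]; last by rewrite /= shape_rotB IH.
by case: s; rewrite /= ?shape_reflB shape_translB.
Qed.

Lemma translB_of_shape B B' : box_shape B = box_shape B' ->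
  B = translB (bx0 B' - bx0 B) (by0 B' - by0 B) B'.
Proof.
case: B => x0 x1 y0 y1 z0 z1; case: B' => x0' x1' y0' y1' z0' z1' [E1 E2 E3 E4].
by rewrite /translB /=; f_equal; lia.
Qed.

Lemma translB_symB k s B u v : exists tx ty, translB u v (symB k s 0 0 B) = symB k s tx ty B.
Proof.
rewrite /symB; elim: k u v => [|k IH] u v /=.
  by case: s; [exists v, u|exists u, v]; case: B => *; rewrite /reflB /translB /=; f_equal; lia.
have [tx [ty E]] := IH (- v) (u + v).
by exists tx, ty; rewrite -E; case: (iter _ _ _) => *; rewrite /rotB /translB /=; f_equal; lia.
Qed.

Lemma sym_shape_inv k s t :
  [/\ tri_ok (sym_shape k s t) = tri_ok t, tri_area (sym_shape k s t) = tri_area t &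
      tri_width (sym_shape k s t) = tri_width t].
Proof.
rewrite /sym_shape; elim: k => [|k [IH1 IH2 IH3]] /=.
  by case: s; case: t => [[[d a] b] c]; rewrite /tri_ok /tri_area /tri_width /=; split; lia.
case: (iter k _ _) IH1 IH2 IH3 => [[[d a] b] c] <- <- <-.
by rewrite /tri_ok /tri_area /tri_width /=; split; lia.
Qed.

Definition tri_box (t : int * int * int * int) : box :=
  let: (d, a, b, c) := t in Box 0 (d - b - 1) 0 (d - c - 1) a (d - 1).

Lemma shape_tri_box t : box_shape (tri_box t) = t.
Proof. by case: t => [[[d a] b] c]; rewrite /box_shape /=; congr (_, _, _, _); lia. Qed.

Definition qr_shape (r : int) (i : nat) : int * int * int * int :=
  match i with
  | 0 => (3 * r, r, r, r)
  | 1 => (3 * r, r - 1, r, r)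
  | 2 => (3 * r + 1, r, r, r + 1)
  | 3 => (3 * r + 1, r, r, r)
  | 4 => (3 * r + 2, r, r + 1, r + 1)
  | _ => (3 * r + 2, r, r, r + 1)
  end.

Lemma inQbase_box r i f : inQbase r i f = inBox (tri_box (qr_shape r i)) f.
Proof.
case_face f; case: i => [|[|[|[|[|i]]]]]; case: d;
  by rewrite /inQbase /inT /inBox /fz /fx /fy /fd /=; lia.
Qed.

Lemma QR_boxP (E : {fset face}) : is_QR E <->
  exists r i k s tx ty, [/\ 1 <= r, (i < 6)%N, (k < 6)%N &
    forall f, (f \in E) = inBox (symB k s tx ty (tri_box (qr_shape r i))) f].
Proof.
split=> [[r [i [k [s [tx [ty [Hr [Hi [Hk HE]]]]]]]]]|[r [i [k [s [tx [ty [Hr Hi Hk HE]]]]]]]].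
  by exists r, i, k, s, tx, ty; split=> // f; rewrite HE inQbase_box inBox_sym.
by exists r, i, k, s, tx, ty; do 3 (split; first by []); move=> f; rewrite HE inQbase_box inBox_sym.
Qed.

Lemma QR_of_filled_box (P : {fset face}) B r i k s : 1 <= r -> (i < 6)%N -> (k < 6)%N ->
  (forall f, (f \in P) = inBox B f) -> box_shape B = sym_shape k s (qr_shape r i) -> is_QR P.
Proof.
move=> Hr Hi Hk HP Hshape; apply/QR_boxP.
set S := symB k s 0 0 (tri_box (qr_shape r i)).
have HBS : B = translB (bx0 S - bx0 B) (by0 S - by0 B) S.
  by apply: translB_of_shape; rewrite Hshape /S shape_sym shape_tri_box.
have [tx [ty HT]] := translB_symB k s (tri_box (qr_shape r i)) (bx0 S - bx0 B) (by0 S - by0 B).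
by exists r, i, k, s, tx, ty; split=> // f; rewrite HP -HT -/S -HBS.
Qed.

Lemma fd_bounds f : 0 <= fd f <= 1.
Proof. by rewrite /fd; case: (f.2). Qed.

Lemma hull_box (P : {fset face}) : P != fset0 -> exists B,
  [/\ forall f, f \in P -> inBox B f, tri_ok (box_shape B) &
      forall K, exists f g, [/\ f \in P, g \in P, line K f = klo K B & line K g = khi K B]].
Proof.
move=> HP0; have Hne : enum_fset P != [::].
  apply: contraNneq HP0 => HP; apply/eqP/fsetP => f.
  by rewrite inE -[f \in P]/(f \in enum_fset P) HP.
have [mX HmX HminX] := seq_argmin (line DX) Hne; have [MX HMX HmaxX] := seq_argmax (line DX) Hne.
have [mY HmY HminY] := seq_argmin (line DY) Hne; have [MY HMY HmaxY] := seq_argmax (line DY) Hne.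
have [mZ HmZ HminZ] := seq_argmin (line DZ) Hne; have [MZ HMZ HmaxZ] := seq_argmax (line DZ) Hne.
set B := Box (fx mX) (fx MX) (fy mY) (fy MY) (fz mZ) (fz MZ).
have HB f : f \in P -> inBox B f.
  move=> Hf; have := HminX f Hf; have := HmaxX f Hf; have := HminY f Hf.
  by have := HmaxY f Hf; have := HminZ f Hf; have := HmaxZ f Hf; rewrite /inBox /=; lia.
exists B; split => // [|[]]; last 3 first.
- by exists mX, MX.
- by exists mY, MY.
- by exists mZ, MZ.
have := HB _ HmX; have := HB _ HMX; have := HB _ HmY; have := HB _ HMY.
have := HB _ HmZ; have := HB _ HMZ; have := fd_bounds mX; have := fd_bounds MX.
have := fd_bounds mY; have := fd_bounds MY; have := fd_bounds mZ; have := fd_bounds MZ.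
by rewrite /tri_ok /inBox /box_shape /= /fz; lia.
Qed.

(* Every polyiamond lies in a box of width at most its site-perimeter:
   the strips met by its hull box are all occupied. *)
Lemma polyiamond_box (P : {fset face}) : is_polyiamond P -> exists B,
  [/\ forall f, f \in P -> inBox B f, tri_ok (box_shape B) & width B <= (site_perimeter P)%:Z].
Proof.
move=> HP; have [B [HPB Hok Hsides]] := hull_box (proj1 HP).
exists B; split => //.
have span K : khi K B - klo K B + 1 <= (size (occupied P K))%:Z.
  have [f [g [Hf Hg Hlo Hhi]]] := Hsides K.
  rewrite -Hlo -Hhi; apply: occupied_span => //.
  by have := line_in_box K (HPB g Hg); lia.
have := site_perimeter_ge_occupied P.
by have := span DX; have := span DY; have := span DZ; rewrite /width /=; lia.
Qed.

(* The defect of T^d_{a,b,c}: zero exactly for regular hexagons, and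
   6 * area + defect = width^2. *)
Definition tri_defect (t : int * int * int * int) : int :=
  let: (d, a, b, c) := t in
  3 * ((a + b + c - d) * (a + b + c - d))
  + 2 * ((a - b) * (a - b) + (b - c) * (b - c) + (c - a) * (c - a)).

Lemma tri_defect_ge0 t : 0 <= tri_defect t.
Proof.
case: t => [[[d a] b] c]; rewrite /tri_defect /=.
have sq (x : int) : 0 <= x * x by rewrite -expr2 sqr_ge0.
by have := sq (a + b + c - d); have := sq (a - b); have := sq (b - c); have := sq (c - a); lia.
Qed.

Lemma area_width_defect t : 6 * tri_area t + tri_defect t = tri_width t * tri_width t.
Proof. by case: t => [[[d a] b] c]; rewrite /tri_area /tri_defect /tri_width /=; lia. Qed.

Definition qr_defect (i : nat) : int :=
  match i with 0 => 0 | 1 => 7 | 2 => 4 | 3 => 3 | 4 => 4 | _ => 7 end.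

Lemma qr_shape_facts r i : 1 <= r -> (i < 6)%N ->
  [/\ tri_ok (qr_shape r i), tri_width (qr_shape r i) = 6 * r + i%:Z &
      tri_defect (qr_shape r i) = qr_defect i].
Proof.
by move=> Hr; case: i => [|[|[|[|[|[|i]]]]]] // _;
  rewrite /tri_ok /tri_width /tri_defect /=; split; lia.
Qed.

Ltac sym_witness k s :=
  exists k, s; split; first done; rewrite /sym_shape /=; congr (_, _, _, _); lia.

(* A shape of width 6r + i with defect at most that of the quasi-regular
   shapes of this width is a symmetric image of the base one: the defect
   bounds a + b + c - d, a - b and b - c to {-1, 0, 1}, and together with
   the width these determine the shape. *)
Lemma small_defect_shape r i t : 1 <= r -> (i < 6)%N ->
  tri_width t = 6 * r + i%:Z -> tri_defect t <= qr_defect i ->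
  exists k s, (k < 6)%N /\ t = sym_shape k s (qr_shape r i).
Proof.
case: t => [[[d a] b] c]; rewrite /tri_width /tri_defect => Hr Hi Hw HD.
have Ed : d = a + b + c - (a + b + c - d) by lia.
have Ea : a = b + (a - b) by lia.
have Eb : b = c + (b - c) by lia.
move: (a + b + c - d) (a - b) (b - c) Ed Ea Eb HD => e u v Ed Ea Eb HD.
have {HD} HD : 3 * (e * e) + 2 * (u * u + v * v + (u + v) * (u + v)) <= qr_defect i.
  by move: HD; rewrite Ea Eb; lia.
have Hdi : qr_defect i <= 7 by case: (i) => [|[|[|[|[|[|?]]]]]].
have sq (x : int) : 0 <= x * x by rewrite -expr2 sqr_ge0.
have unit (x : int) : 3 * (x * x) <= 7 -> x = -1 \/ x = 0 \/ x = 1.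
  move=> Hx; have Hb : -1 <= x <= 1 by nia.
  lia.
have He : e = -1 \/ e = 0 \/ e = 1.
  by apply: unit; have := sq u; have := sq v; have := sq (u + v); lia.
have Hu : u = -1 \/ u = 0 \/ u = 1.
  by apply: unit; have := sq e; have := sq v; have := sq (u + v); lia.
have Hv : v = -1 \/ v = 0 \/ v = 1.
  by apply: unit; have := sq e; have := sq u; have := sq (u + v); lia.
clear sq unit Hdi; move: Ed Ea Eb HD.
case: He => [|[|]] ->; case: Hu => [|[|]] ->; case: Hv => [|[|]] -> Ed Ea Eb HD.
all: case: i Hi Hw HD => [|[|[|[|[|[|//]]]]]] _ Hw /= HD.
all: first [ lia
  | sym_witness 0%N false | sym_witness 0%N true | sym_witness 1%N false
  | sym_witness 1%N true | sym_witness 2%N false | sym_witness 2%N true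
  | sym_witness 3%N false | sym_witness 3%N true | sym_witness 4%N false
  | sym_witness 4%N true | sym_witness 5%N false | sym_witness 5%N true ].
Qed.

Lemma QR_area_perimeter (E : {fset face}) : is_QR E -> exists r i,
  [/\ 1 <= r, (i < 6)%N, (area E)%:Z = tri_area (qr_shape r i) &
      (edge_perimeter E)%:Z <= 6 * r + i%:Z].
Proof.
move=> /QR_boxP [r [i [k [s [tx [ty [Hr Hi Hk HE]]]]]]].
have [Hok Hw _] := qr_shape_facts Hr Hi.
have [Hok' Harea Hw'] := sym_shape_inv k s (qr_shape r i).
have Hshape := shape_sym k s tx ty (tri_box (qr_shape r i)).
rewrite shape_tri_box in Hshape.
have HokE : tri_ok (box_shape (symB k s tx ty (tri_box (qr_shape r i)))) by rewrite Hshape Hok'.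
exists r, i; split => //; first by rewrite (area_filled_box HokE HE) Hshape.
by rewrite -Hw -Hw' -Hshape -width_shape; apply: filled_box_perimeter.
Qed.

(* A proper shape no wider than the quasi-regular shapes of width 6r + i,
   but with at least their area, is a symmetric image of the base shape:
   the identity 6 * area + defect = width^2 forces equal width and a defect
   no larger than the quasi-regular one. *)
Lemma extremal_shape r i t : 1 <= r -> (i < 6)%N -> tri_ok t ->
  tri_width t <= 6 * r + i%:Z -> tri_area (qr_shape r i) <= tri_area t ->
  exists k s, (k < 6)%N /\ t = sym_shape k s (qr_shape r i).
Proof.
move=> Hr Hi Hok Hw Harea.
have [_ Hwq Hdq] := qr_shape_facts Hr Hi.
have Hdi : qr_defect i <= 7 by case: (i) => [|[|[|[|[|[|?]]]]]].
have Ht := area_width_defect t; have Hq := area_width_defect (qr_shape r i).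
have HD := tri_defect_ge0 t.
have Hw0 : 0 <= tri_width t by move: Hok; case: t {Ht HD Hw Harea} => [[[d a] b] c] /=; lia.
have Hweq : tri_width t = 6 * r + i%:Z.
  rewrite Hwq Hdq in Hq; apply/eqP; rewrite eq_le Hw /=.
  apply/negP => /negP; rewrite -ltNge => Hlt.
  have : tri_width t * tri_width t <= (6 * r + i%:Z - 1) * (6 * r + i%:Z - 1) by nia.
  lia.
apply: small_defect_shape => //.
by rewrite Hwq Hdq in Hq; rewrite Hweq in Ht; lia.
Qed.

Theorem lemma7p5 (E P : {fset face}) :
  is_QR E -> is_polyiamond P -> ~ is_QR P -> (area E <= area P)%N ->
  (edge_perimeter E < edge_perimeter P)%N /\
  (site_perimeter E < site_perimeter P)%N.
Proof.
move=> /QR_area_perimeter [r [i [Hr Hi HareaE HpE]]] HP HnQ Harea.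
have [B [HPB Hok HwB]] := polyiamond_box HP.
have HsE := site_le_edge E; have HsP := site_le_edge P.
(* If the box of P is wider than E, the perimeters compare through it. *)
have [Hwide|Hnarrow] := ltP (6 * r + i%:Z) (width B); first by split; lia.
(* Otherwise the box of P is a quasi-regular shape that P fills. *)
exfalso; apply: HnQ.
have [k [s [Hk Hshape]]] : exists k s, (k < 6)%N /\ box_shape B = sym_shape k s (qr_shape r i).
  apply: extremal_shape => //; first by rewrite -width_shape.
  by have := area_le_box Hok HPB; lia.
apply: (QR_of_filled_box Hr Hi Hk _ Hshape); apply: filled_of_area => //.
by rewrite Hshape; have [_ -> _] := sym_shape_inv k s (qr_shape r i); lia.
Qed.
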